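(* Let $\mathcal D$ be universal with at least two blocks, $\mathcal B$ the block containing $\min(\mathcal D\setminus\{0\})$, $\mathbf m=\max\mathcal B$, $\mathrm M=(M,d)\in\mathfrak U_{\mathcal D}$, and $\sim$ the equivalence relation $x\sim y\iff d(x,y)\le\mathbf m$. Let $\mathrm M/\!\sim$ be the set of $\sim$-classes with the metric $d_{\min}(A,B)=\min\{d(a,b):a\in A,b\in B\}$, and let $\mathcal D_{\min}$ be its set of distances. Then $\mathcal D_{\min}$ is universal and $\mathrm M/\!\sim\ \in\mathfrak U_{\mathcal D_{\min}}$. Moreover, if $N$ is the point set of a copy of $\mathrm M/\!\sim$ in $\mathrm M/\!\sim$, then the subspace of $\mathrm M$ on $\bigcup N$ (the union of the classes belonging to $N$) is a copy of $\mathrm M$ in $\mathrm M$.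
   Context: $\mathcal D$ is a finite subset of $\mathbb R_{\ge0}$ containing $0$. $\mathfrak U_{\mathcal D}$ is the class of countable homogeneous metric spaces (every isometry between finite subspaces extends to an isometry of the space onto itself) with distance set exactly $\mathcal D$ into which every finite metric space with distances in $\mathcal D$ embeds isometrically; $\mathcal D$ is universal if this class is nonempty. A copy of a space in itself is the image of an isometric embedding of the space into itself. For $r\in\mathcal D$ with $r<\max\mathcal D$, $r^{+}$ is the smallest element of $\mathcal D$ larger than $r$; for $r>0$, $r^{-}$ is the largest element of $\mathcal D$ smaller than $r$. A block of $\mathcal D$ is a nonempty set $\mathcal B=\{b_0<b_1<\dots<b_n\}\subseteq\mathcal D\setminus\{0\}$ such that $b_0>2b_0^{-}$, $b_{i+1}=b_i^{+}$ for all $i<n$, and $b_i+b_0\ge b_{i+1}$ for all $i<n$; for universal $\mathcal D$ the blocks partition $\mathcal D\setminus\{0\}$. *)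

From Stdlib Require Import Reals List ClassicalEpsilon.
Open Scope R_scope.

Definition is_metric {X : Type} (d : X -> X -> R) : Prop :=
  (forall x y, 0 <= d x y) /\
  (forall x y, d x y = 0 <-> x = y) /\
  (forall x y, d x y = d y x) /\
  (forall x y z, d x z <= d x y + d y z).

Definition countable (X : Type) : Prop :=
  exists f : X -> nat, forall x y, f x = f y -> x = y.

Definition dist_set {X : Type} (d : X -> X -> R) (r : R) : Prop :=
  exists x y, d x y = r.

Definition finite_set (D : R -> Prop) : Prop :=
  exists l : list R, forall r, D r <-> In r l.
Definition finite_type (F : Type) : Prop :=
  exists l : list F, forall x, In x l.

Definition dist_setting (D : R -> Prop) : Prop :=
  finite_set D /\ D 0 /\ forall r, D r -> 0 <= r.

Definition isometric {X Y : Type} (dX : X -> X -> R) (dY : Y -> Y -> R)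
  (f : X -> Y) : Prop := forall x y, dY (f x) (f y) = dX x y.

(** Homogeneity: every isometry between finite subspaces (given as a map g
    defined on the finite set of points l, isometric there) extends to an
    isometry of the space onto itself. *)
Definition homogeneous {X : Type} (d : X -> X -> R) : Prop :=
  forall (l : list X) (g : X -> X),
    (forall x y, In x l -> In y l -> d (g x) (g y) = d x y) ->
    exists h : X -> X, isometric d d h /\ (forall y, exists x, h x = y) /\
      (forall x, In x l -> h x = g x).

Definition in_U (D : R -> Prop) (X : Type) (d : X -> X -> R) : Prop :=
  is_metric d /\ countable X /\ homogeneous d /\
  (forall r, dist_set d r <-> D r) /\
  (forall (F : Type) (e : F -> F -> R),
      finite_type F -> is_metric e -> (forall a b, D (e a b)) ->
      exists f : F -> X, isometric e d f).

Definition universal (D : R -> Prop) : Prop :=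
  dist_setting D /\ exists (X : Type) (d : X -> X -> R), in_U D X d.

Definition is_pred (D : R -> Prop) (r p : R) : Prop :=
  D p /\ p < r /\ forall q, D q -> q < r -> q <= p.
Definition is_succ (D : R -> Prop) (r s : R) : Prop :=
  D s /\ r < s /\ forall q, D q -> r < q -> s <= q.

Definition consec (B : R -> Prop) (b c : R) : Prop :=
  B b /\ B c /\ b < c /\ forall e, B e -> ~ (b < e /\ e < c).

Definition block_cond (D : R -> Prop) (B : R -> Prop) : Prop :=
  (forall b, B b -> D b /\ b <> 0) /\
  exists b0, B b0 /\ (forall b, B b -> b0 <= b) /\
    (forall p, is_pred D b0 p -> b0 > 2 * p) /\
    (forall b c, consec B b c -> is_succ D b c) /\
    (forall b c, consec B b c -> b + b0 >= c).

(** A block: an inclusion-maximal set satisfying the block conditions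
    (this is the reading under which blocks partition D \ {0}). *)
Definition is_block (D : R -> Prop) (B : R -> Prop) : Prop :=
  block_cond D B /\
  forall B', block_cond D B' -> (forall r, B r -> B' r) -> forall r, B' r -> B r.

Definition sim_class {M : Type} (d : M -> M -> R) (m : R) (x : M) : M -> Prop :=
  fun y => d x y <= m.

Definition classes {M : Type} (d : M -> M -> R) (m : R) : Type :=
  { A : M -> Prop | exists x, A = sim_class d m x }.

(** d_min(A,B) = min { d(a,b) : a in A, b in B } (chosen by epsilon;
    the minimum exists since the distance set is finite). *)
Definition dmin {M : Type} (d : M -> M -> R) (A B : M -> Prop) : R :=
  epsilon (inhabits 0) (fun r =>
    (exists a b, A a /\ B b /\ d a b = r) /\
    (forall a b, A a -> B b -> r <= d a b)).

Definition dquot {M : Type} (d : M -> M -> R) (m : R)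
  (A B : classes d m) : R := dmin d (proj1_sig A) (proj1_sig B).

Definition is_copy {X : Type} (d : X -> X -> R) (S : X -> Prop) : Prop :=
  exists f : X -> X, isometric d d f /\ forall y, S y <-> exists x, f x = y.

From Stdlib Require Import Reals List ClassicalEpsilon Lra Classical ProofIrrelevance
  FunctionalExtensionality PropExtensionality.
Open Scope R_scope.

(* Maximality of [B], combined with the
   amalgamation of two triangles over a common side inside the universal space [M], shows that
   no distance of [D] lies in (m, 2 m].  Hence [~] is an equivalence relation, and all distances
   between two distinct classes lie within [m] of their minimum; so every finite configuration of
   classes is realized by representatives at exactly the [d_min]-distances, and a point of [M] can
   be moved inside its class to realize any admissible one-point extension whose distances it
   already has up to [m].  Homogeneity and universality of [M/~] follow from those of [M].
   For the second part, a copy [N] of [M/~] has the extension property inside [M/~]; the union of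
   its classes then has the extension property inside [M], and a back-and-forth construction
   along an enumeration of [M] gives an isometry of [M] onto that union. *)

Lemma ex_min_of_list (l : list R) (P : R -> Prop) :
  (forall r, P r -> In r l) -> (exists r, P r) -> exists r, P r /\ forall s, P s -> r <= s.
Proof.
  revert P; induction l as [|a l IH]; intros P Hl [r Hr]; [destruct (Hl r Hr)|].
  destruct (classic (exists r, P r /\ r <> a)) as [Hex|Hno].
  - destruct (IH (fun r => P r /\ r <> a)) as [x [[Px _] Hmin]]; auto.
    { intros s [Ps Hsa]. destruct (Hl s Ps); [congruence|assumption]. }
    destruct (classic (P a /\ a <= x)) as [[Pa Hax]|Hn].
    + exists a; split; auto. intros s Ps.
      destruct (Req_dec s a) as [->|Hsa]; [lra|]. specialize (Hmin s (conj Ps Hsa)); lra.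
    + exists x; split; auto. intros s Ps.
      destruct (Req_dec s a) as [->|Hsa]; [|auto].
      destruct (Rle_dec a x); [tauto|lra].
  - assert (Ha : forall s, P s -> s = a) by (intros s Ps; apply NNPP; eauto).
    exists r; split; auto. intros s Ps. rewrite (Ha r Hr), (Ha s Ps); lra.
Qed.

Lemma ex_max_of_list (l : list R) (P : R -> Prop) :
  (forall r, P r -> In r l) -> (exists r, P r) -> exists r, P r /\ forall s, P s -> s <= r.
Proof.
  intros Hl [r Hr].
  destruct (ex_min_of_list (map Ropp l) (fun x => P (- x))) as [x [Px Hx]].
  - intros s Ps. rewrite <- (Ropp_involutive s). apply in_map, Hl, Ps.
  - exists (- r). rewrite Ropp_involutive; exact Hr.
  - exists (- x); split; auto. intros s Ps.
    specialize (Hx (- s)). rewrite Ropp_involutive in Hx. specialize (Hx Ps); lra.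
Qed.

Lemma finite_set_incl (l : list R) (P : R -> Prop) :
  (forall r, P r -> In r l) -> finite_set P.
Proof.
  intros Hl. exists (filter (fun r => if excluded_middle_informative (P r) then true else false) l).
  intros r. rewrite filter_In.
  destruct (excluded_middle_informative (P r)); intuition (discriminate || auto).
Qed.

Lemma finite_type_In {A : Type} (l : list A) : finite_type {x | In x l}.
Proof.
  enough (H : forall l', exists L : list {x | In x l}, forall t, In (proj1_sig t) l' -> In t L).
  { destruct (H l) as [L HL]. exists L. intros t. apply HL, proj2_sig. }
  intros l'. induction l' as [|a l' [L HL]]; [exists nil; intros t []|].
  destruct (classic (In a l)) as [Ha|Ha].
  - exists (exist _ a Ha :: L). intros t [Ht|Ht]; [left|right; auto].
    apply eq_sig_hprop; [intros; apply proof_irrelevance|exact Ht].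
  - exists L. intros t [Ht|Ht]; auto. exfalso; apply Ha; rewrite Ht; apply proj2_sig.
Qed.

Section Metric.
Context {X : Type} {d : X -> X -> R} (Hd : is_metric d).

Lemma dist_ge0 x y : 0 <= d x y.
Proof. apply Hd. Qed.

Lemma dist_eq0 x y : d x y = 0 -> x = y.
Proof. apply Hd. Qed.

Lemma dist_xx x : d x x = 0.
Proof. apply Hd; reflexivity. Qed.

Lemma distC x y : d x y = d y x.
Proof. apply Hd. Qed.

Lemma dist_triangle x y z : d x z <= d x y + d y z.
Proof. apply Hd. Qed.

End Metric.

Definition pairs_isometric {X : Type} (d : X -> X -> R) (P : list (X * X)) : Prop :=
  forall p q, In p P -> In q P -> d (snd p) (snd q) = d (fst p) (fst q).

Definition extension_property {X : Type} (d : X -> X -> R) (C : X -> Prop) : Prop :=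
  forall (l : list X) (y : X), (forall a, In a l -> C a) ->
    exists y', C y' /\ forall a, In a l -> d y' a = d y a.

Section Homogeneous.
Context {X : Type} {d : X -> X -> R} (Hd : is_metric d) (Hhom : homogeneous d).

Lemma pairs_isometric_cons P x s : pairs_isometric d P ->
  (forall p, In p P -> d s (snd p) = d x (fst p)) -> pairs_isometric d ((x, s) :: P).
Proof.
  intros HP Hxs p q [<-|Hp] [<-|Hq]; simpl; auto.
  - rewrite !(dist_xx Hd); reflexivity.
  - rewrite (distC Hd), (distC Hd (fst p)); auto.
Qed.

Lemma extend_pairs_isometry (P : list (X * X)) : pairs_isometric d P ->
  exists h, isometric d d h /\ (forall y, exists x, h x = y) /\
    forall p, In p P -> h (fst p) = snd p.
Proof.
  intros HP.
  set (g := fun x => epsilon (inhabits x) (fun y => In (x, y) P)).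
  assert (Hg : forall p, In p P -> g (fst p) = snd p).
  { intros [x y] Hp; simpl.
    assert (Hgx : In (x, g x) P) by (apply (epsilon_spec (inhabits x)); eauto).
    apply (dist_eq0 Hd). exact (eq_trans (HP _ _ Hgx Hp) (dist_xx Hd x)). }
  destruct (Hhom (map fst P) g) as [h [Hh [Hsurj Hext]]].
  { intros x y Hx Hy.
    apply in_map_iff in Hx as [p [<- Hp]]; apply in_map_iff in Hy as [q [<- Hq]].
    rewrite !Hg by assumption. apply HP; assumption. }
  exists h; repeat split; auto.
  intros p Hp. rewrite Hext by (apply in_map; assumption). apply Hg, Hp.
Qed.

Lemma copy_extension_property (C : X -> Prop) : is_copy d C -> extension_property d C.
Proof.
  intros [f [Hf HS]] l y Hl.
  set (pre := fun a => epsilon (inhabits a) (fun x => f x = a)).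
  assert (Hpre : forall a, In a l -> f (pre a) = a).
  { intros a Ha. apply (epsilon_spec (inhabits a) (fun x => f x = a)), HS, Hl, Ha. }
  destruct (extend_pairs_isometry (map (fun a => (a, pre a)) l)) as [h [Hh [_ Hha]]].
  { intros p q Hp Hq.
    apply in_map_iff in Hp as [a [<- Ha]]; apply in_map_iff in Hq as [b [<- Hb]]; simpl.
    rewrite <- Hf, !Hpre; auto. }
  exists (f (h y)); split; [apply HS; eauto|].
  intros a Ha. rewrite <- (Hpre a Ha) at 1. rewrite Hf.
  replace (pre a) with (h a) by (apply (Hha (a, pre a)), in_map_iff; eauto). apply Hh.
Qed.

Section BackAndForth.
Variable C : X -> Prop.
Hypothesis HS : extension_property d C.

Definition partial_iso (P : list (X * X)) : Prop :=
  (forall p, In p P -> C (snd p)) /\ pairs_isometric d P.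

Lemma partial_iso_forth P x : partial_iso P -> exists s, partial_iso ((x, s) :: P).
Proof.
  intros [HPS HP].
  destruct (extend_pairs_isometry P HP) as [h [Hh [_ HhP]]].
  destruct (HS (map snd P) (h x)) as [s [Hs Hsd]].
  { intros a Ha. apply in_map_iff in Ha as [p [<- Hp]]. auto. }
  exists s; split; [intros p [<-|Hp]; auto|].
  apply pairs_isometric_cons; auto. intros p Hp.
  rewrite Hsd by (apply in_map, Hp). rewrite <- (HhP p Hp). apply Hh.
Qed.

Lemma partial_iso_back P s : partial_iso P -> C s -> exists x, partial_iso ((x, s) :: P).
Proof.
  intros [HPS HP] Hs.
  destruct (extend_pairs_isometry (map (fun p => (snd p, fst p)) P)) as [h [Hh [_ HhP]]].
  { intros p q Hp Hq.
    apply in_map_iff in Hp as [p' [<- Hp]]; apply in_map_iff in Hq as [q' [<- Hq]].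
    symmetry; apply HP; assumption. }
  exists (h s); split; [intros p [<-|Hp]; auto|].
  apply pairs_isometric_cons; auto. intros p Hp.
  replace (fst p) with (h (snd p)) by (apply (HhP (snd p, fst p)), in_map_iff; eauto).
  symmetry; apply Hh.
Qed.

Variable iota : X -> nat.
Hypothesis iota_inj : forall x y, iota x = iota y -> x = y.

Definition forth_step (n : nat) (P : list (X * X)) : list (X * X) :=
  match excluded_middle_informative (exists x, iota x = n) with
  | left H => let x := proj1_sig (constructive_indefinite_description _ H) in
      (x, epsilon (inhabits x) (fun s => partial_iso ((x, s) :: P))) :: P
  | right _ => P
  end.

Definition back_step (n : nat) (P : list (X * X)) : list (X * X) :=
  match excluded_middle_informative (exists s, C s /\ iota s = n) with
  | left H => let s := proj1_sig (constructive_indefinite_description _ H) in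
      (epsilon (inhabits s) (fun x => partial_iso ((x, s) :: P)), s) :: P
  | right _ => P
  end.

Fixpoint stage (n : nat) : list (X * X) :=
  match n with 0 => nil | S k => back_step k (forth_step k (stage k)) end.

Lemma forth_choice_partial_iso P x : partial_iso P ->
  partial_iso ((x, epsilon (inhabits x) (fun s => partial_iso ((x, s) :: P))) :: P).
Proof. intros HP. apply (epsilon_spec (inhabits x)), partial_iso_forth, HP. Qed.

Lemma back_choice_partial_iso P s : partial_iso P -> C s ->
  partial_iso ((epsilon (inhabits s) (fun x => partial_iso ((x, s) :: P)), s) :: P).
Proof. intros HP Hs. apply (epsilon_spec (inhabits s)), partial_iso_back; assumption. Qed.

Lemma stage_partial_iso n : partial_iso (stage n).
Proof.
  induction n as [|n IH]; [split; [intros ? []|intros ? ? []]|]; simpl.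
  assert (HF : partial_iso (forth_step n (stage n))).
  { unfold forth_step. destruct excluded_middle_informative; auto using forth_choice_partial_iso. }
  unfold back_step. destruct excluded_middle_informative as [H|]; auto.
  apply back_choice_partial_iso; auto. apply (proj2_sig (constructive_indefinite_description _ H)).
Qed.

Lemma stage_succ n p : In p (stage n) -> In p (stage (S n)).
Proof.
  simpl; unfold back_step, forth_step.
  do 2 destruct excluded_middle_informative; simpl; auto.
Qed.

Lemma stage_mono n n' p : (n <= n')%nat -> In p (stage n) -> In p (stage n').
Proof. induction 1; auto using stage_succ. Qed.

Lemma stages_isometric n n' p q : In p (stage n) -> In q (stage n') ->
  d (snd p) (snd q) = d (fst p) (fst q).
Proof.
  intros Hp Hq. apply (proj2 (stage_partial_iso (Nat.max n n'))).
  - apply (stage_mono n); [apply Nat.le_max_l|exact Hp].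
  - apply (stage_mono n'); [apply Nat.le_max_r|exact Hq].
Qed.

Lemma stage_forth x : exists s, In (x, s) (stage (S (iota x))).
Proof.
  simpl; unfold back_step, forth_step.
  destruct (excluded_middle_informative (exists x', iota x' = iota x)) as [H|H]; [|exfalso; eauto].
  destruct (constructive_indefinite_description _ H) as [x' Hx']; simpl.
  rewrite (iota_inj _ _ Hx').
  destruct excluded_middle_informative; eexists; simpl; eauto.
Qed.

Lemma stage_back s : C s -> exists x, In (x, s) (stage (S (iota s))).
Proof.
  intros Hs; simpl; unfold back_step.
  destruct (excluded_middle_informative (exists s', C s' /\ iota s' = iota s)) as [H|H];
    [|exfalso; eauto].
  destruct (constructive_indefinite_description _ H) as [s' [? Hs']]; simpl.
  rewrite (iota_inj _ _ Hs'). eexists; left; reflexivity.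
Qed.

Lemma back_and_forth_copy : is_copy d C.
Proof.
  set (g := fun x => epsilon (inhabits x) (fun s => In (x, s) (stage (S (iota x))))).
  assert (Hg : forall x, In (x, g x) (stage (S (iota x)))).
  { intros x. apply (epsilon_spec (inhabits x)), stage_forth. }
  exists g; split; [intros x y; apply (stages_isometric _ _ _ _ (Hg x) (Hg y))|].
  intros y; split.
  - intros Hy. destruct (stage_back y Hy) as [x Hx]. exists x.
    apply (dist_eq0 Hd). exact (eq_trans (stages_isometric _ _ _ _ (Hg x) Hx) (dist_xx Hd x)).
  - intros [x <-]. apply (proj1 (stage_partial_iso _) _ (Hg x)).
Qed.

End BackAndForth.

Lemma extension_property_copy (C : X -> Prop) :
  countable X -> extension_property d C -> is_copy d C.
Proof. intros [iota Hiota] HS. exact (back_and_forth_copy C HS iota Hiota). Qed.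

End Homogeneous.

Section Universal.
Variables (D : R -> Prop) (M : Type) (d : M -> M -> R).
Hypothesis HU : in_U D M d.
Hypothesis HD0 : D 0.

Let Hd : is_metric d := proj1 HU.

Lemma in_U_dist x y : D (d x y).
Proof. apply HU. exists x, y; reflexivity. Qed.

Lemma in_U_inhabited : inhabited M.
Proof.
  destruct (proj2 (proj2 (proj2 (proj2 HU))) unit (fun _ _ => 0)) as [f _].
  - exists (tt :: nil). intros []; left; reflexivity.
  - repeat split; intros; try lra; destruct x, y; reflexivity.
  - intros; exact HD0.
  - exact (inhabits (f tt)).
Qed.

Definition consistent_type (l : list (M * R)) : Prop :=
  forall p q, In p l -> In q l ->
    snd p <= snd q + d (fst p) (fst q) /\ d (fst p) (fst q) <= snd p + snd q.

Definition admissible_type (l : list (M * R)) : Prop :=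
  (forall p, In p l -> D (snd p) /\ 0 < snd p) /\ consistent_type l.

Definition type_dist (l : list (M * R)) (x y : option {p | In p l}) : R :=
  match x, y with
  | None, None => 0
  | None, Some q => snd (proj1_sig q)
  | Some p, None => snd (proj1_sig p)
  | Some p, Some q => d (fst (proj1_sig p)) (fst (proj1_sig q))
  end.

Lemma type_dist_metric l : admissible_type l -> is_metric (type_dist l).
Proof.
  intros [Hpos Htri].
  assert (Hp : forall t : {p | In p l}, 0 < snd (proj1_sig t)) by (intros t; apply Hpos, proj2_sig).
  assert (Ht : forall t t' : {p | In p l}, _)
    by (intros t t'; exact (Htri _ _ (proj2_sig t) (proj2_sig t'))).
  split; [|split; [|split]].
  - intros [t|] [t'|]; simpl; try apply (dist_ge0 Hd); try apply Rlt_le, Hp; lra.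
  - intros x y; split; [|intros ->; destruct y; simpl; [apply (dist_xx Hd)|reflexivity]].
    destruct x as [t|], y as [t'|]; simpl; intros H;
      try pose proof (Hp t); try pose proof (Hp t'); try lra; [|reflexivity].
    f_equal. apply eq_sig_hprop; [intros; apply proof_irrelevance|].
    destruct t as [[a r] Ha], t' as [[b s] Hb]; simpl in *.
    apply (dist_eq0 Hd) in H; subst b.
    pose proof (Htri _ _ Ha Hb); pose proof (Htri _ _ Hb Ha); simpl in *.
    rewrite (dist_xx Hd) in *. f_equal; lra.
  - intros [t|] [t'|]; simpl; try reflexivity; apply (distC Hd).
  - intros [t|] [t'|] [t''|]; simpl; try apply (dist_triangle Hd);
      try pose proof (Ht t t'); try pose proof (Ht t t''); try pose proof (Ht t'' t');
      try pose proof (Hp t'); try rewrite (distC Hd (fst (proj1_sig t''))) in *; lra.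
Qed.

(* The abstract one-point extension is a finite D-metric space, so it embeds in M by
   universality; homogeneity then moves the embedded copy of [map fst l] back onto [map fst l]. *)
Lemma one_point_extension (l : list (M * R)) : admissible_type l ->
  exists w, forall p, In p l -> d w (fst p) = snd p.
Proof.
  intros Hl.
  destruct (finite_type_In l) as [L HL].
  destruct (proj2 (proj2 (proj2 (proj2 HU))) _ (type_dist l)) as [f Hf].
  - exists (None :: map Some L). intros [t|]; [right; apply in_map, HL|left; reflexivity].
  - apply type_dist_metric, Hl.
  - intros [t|] [t'|]; simpl; auto using in_U_dist; apply Hl, proj2_sig.
  - destruct (extend_pairs_isometry Hd (proj1 (proj2 (proj2 HU)))
                (map (fun t => (f (Some t), fst (proj1_sig t))) L)) as [h [Hh [_ HhL]]].
    { intros p q Hp Hq.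
      apply in_map_iff in Hp as [t [<- _]]; apply in_map_iff in Hq as [t' [<- _]].
      simpl. symmetry; apply (Hf (Some t) (Some t')). }
    exists (h (f None)). intros p Hp.
    set (t := exist (fun p => In p l) p Hp).
    replace (fst p) with (h (f (Some t)))
      by (apply (HhL (_, fst p)), in_map_iff; exists t; split; [reflexivity|apply HL]).
    rewrite Hh. apply (Hf None (Some t)).
Qed.

Lemma four_point_amalgam a b c e x : D a -> D b -> D c -> D e -> D x ->
  0 < a -> 0 < b -> 0 < c -> 0 < e -> 0 < x ->
  a <= b + x -> b <= a + x -> x <= a + b -> c <= e + x -> e <= c + x -> x <= c + e ->
  exists f, D f /\ f <= a + c /\ a <= c + f /\ c <= a + f /\
    f <= b + e /\ b <= e + f /\ e <= b + f.
Proof.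
  intros.
  destruct in_U_inhabited as [u].
  destruct (one_point_extension ((u, x) :: nil)) as [v Hv].
  { split; [intros p [<-|[]]; auto|].
    intros p q [<-|[]] [<-|[]]; simpl; rewrite (dist_xx Hd); lra. }
  specialize (Hv _ (or_introl eq_refl)); simpl in Hv.
  assert (Hvu : d u v = x) by (rewrite (distC Hd); exact Hv).
  assert (Hpair : forall r s, D r -> D s -> 0 < r -> 0 < s -> r <= s + x -> s <= r + x ->
            x <= r + s -> exists p, d p u = r /\ d p v = s).
  { intros r s Dr Ds Hr Hs Hrs Hsr Hx.
    destruct (one_point_extension ((u, r) :: (v, s) :: nil)) as [p Hp].
    - split; [intros q [<-|[<-|[]]]; auto|].
      intros q q' [<-|[<-|[]]] [<-|[<-|[]]]; simpl; rewrite ?(dist_xx Hd), ?Hv, ?Hvu; lra.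
    - exists p; split; [apply (Hp (u, r))|apply (Hp (v, s))]; simpl; auto. }
  destruct (Hpair a b) as [p [Hpu Hpv]]; auto.
  destruct (Hpair c e) as [q [Hqu Hqv]]; auto.
  exists (d p q); split; [apply in_U_dist|].
  pose proof (dist_triangle Hd p u q); pose proof (dist_triangle Hd u p q);
  pose proof (dist_triangle Hd p q u); pose proof (dist_triangle Hd p v q);
  pose proof (dist_triangle Hd v p q); pose proof (dist_triangle Hd p q v).
  rewrite (distC Hd u p), (distC Hd u q), (distC Hd v p), (distC Hd v q) in *.
  repeat split; lra.
Qed.

End Universal.

Arguments consistent_type {M} d l.
Arguments admissible_type D {M} d l.

Section Quotient.
Variables (D : R -> Prop) (M : Type) (d : M -> M -> R) (m : R).
Hypothesis HU : in_U D M d.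
Hypothesis HD0 : D 0.
Hypothesis HfinD : finite_set D.
Hypothesis Dm : D m.
Hypothesis m_pos : 0 < m.
Hypothesis gap : forall r, D r -> m < r -> 2 * m < r.

Let Hd : is_metric d := proj1 HU.
Let dD := in_U_dist D M d HU.

Local Notation Q := (classes d m).
Local Notation dq := (dquot d m).
Local Notation "x \in X" := (proj1_sig X x) (at level 70, no associativity).

Definition near (r s : R) : Prop := r - s <= m /\ s - r <= m.

Definition cls (x : M) : Q := exist _ (sim_class d m x) (ex_intro _ x eq_refl).

(* Two steps of length at most [m] give at most [2 m], and [gap] excludes (m, 2 m]. *)
Lemma sim_trans x y z : d x y <= m -> d y z <= m -> d x z <= m.
Proof.
  intros Hxy Hyz. pose proof (dist_triangle Hd x y z).
  destruct (Rle_dec (d x z) m) as [|Hn]; [assumption|].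
  pose proof (gap _ (dD x z) (Rnot_le_lt _ _ Hn)). lra.
Qed.

Lemma cls_eqP x y : cls x = cls y <-> d x y <= m.
Proof.
  split.
  - intros H. apply (f_equal (fun X : Q => y \in X)) in H; simpl in H; unfold sim_class in H.
    rewrite H, (dist_xx Hd); lra.
  - intros H. apply eq_sig_hprop; [intros; apply proof_irrelevance|]; simpl.
    extensionality z. apply propositional_extensionality; unfold sim_class; split; intros Hz.
    + apply sim_trans with x; [rewrite (distC Hd)|]; assumption.
    + apply sim_trans with y; assumption.
Qed.

Lemma cls_mem x : x \in cls x.
Proof. simpl; unfold sim_class. rewrite (dist_xx Hd); lra. Qed.

Lemma class_of_mem (X : Q) x : x \in X -> X = cls x.
Proof.
  destruct X as [A [x0 ->]]; simpl; intros H.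
  rewrite <- (proj2 (cls_eqP x0 x) H).
  apply eq_sig_hprop; [intros; apply proof_irrelevance|reflexivity].
Qed.

Lemma class_inhabited (X : Q) : exists x, x \in X.
Proof. destruct X as [A [x ->]]. exists x. apply cls_mem. Qed.

Lemma class_mem_near (X : Q) a b : a \in X -> b \in X -> d a b <= m.
Proof.
  intros Ha Hb. apply cls_eqP. rewrite <- (class_of_mem X a Ha), <- (class_of_mem X b Hb).
  reflexivity.
Qed.

Lemma dist_gt_m (X Y : Q) a b : X <> Y -> a \in X -> b \in Y -> m < d a b.
Proof.
  intros Hne Ha Hb. apply Rnot_le_lt. intros H. apply Hne.
  rewrite (class_of_mem X a Ha), (class_of_mem Y b Hb). apply cls_eqP, H.
Qed.

Definition is_min_dist (X Y : Q) (r : R) : Prop :=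
  (exists a b, a \in X /\ b \in Y /\ d a b = r) /\
  (forall a b, a \in X -> b \in Y -> r <= d a b).

Lemma dq_is_min_dist X Y : is_min_dist X Y (dq X Y).
Proof.
  unfold dquot, dmin. apply epsilon_spec. destruct HfinD as [lD HlD].
  destruct (ex_min_of_list lD (fun r => exists a b, a \in X /\ b \in Y /\ d a b = r))
    as [r [Hr Hmin]].
  - intros r [a [b [_ [_ <-]]]]. apply HlD, dD.
  - destruct (class_inhabited X) as [a Ha], (class_inhabited Y) as [b Hb]. eauto 6.
  - exists r; split; [exact Hr|]. intros a b Ha Hb. apply Hmin; eauto.
Qed.

Lemma dq_eq X Y r : is_min_dist X Y r -> dq X Y = r.
Proof.
  intros [[a [b [Ha [Hb <-]]]] Hr]. destruct (dq_is_min_dist X Y) as [[a' [b' [Ha' [Hb' <-]]]] Hq].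
  specialize (Hr _ _ Ha' Hb'); specialize (Hq _ _ Ha Hb); lra.
Qed.

Lemma dq_attained X Y : exists a b, a \in X /\ b \in Y /\ d a b = dq X Y.
Proof. apply dq_is_min_dist. Qed.

Lemma dq_le X Y a b : a \in X -> b \in Y -> dq X Y <= d a b.
Proof. apply dq_is_min_dist. Qed.

Lemma dq_in_D X Y : D (dq X Y).
Proof. destruct (dq_attained X Y) as [a [b [_ [_ <-]]]]. apply dD. Qed.

Lemma dq_ge0 X Y : 0 <= dq X Y.
Proof. destruct (dq_attained X Y) as [a [b [_ [_ <-]]]]. apply (dist_ge0 Hd). Qed.

Lemma dq_xx X : dq X X = 0.
Proof.
  apply dq_eq. destruct (class_inhabited X) as [a Ha].
  split; [exists a, a; rewrite (dist_xx Hd); auto|intros; apply (dist_ge0 Hd)].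
Qed.

Lemma dqC X Y : dq X Y = dq Y X.
Proof.
  apply dq_eq. destruct (dq_is_min_dist Y X) as [[a [b [Ha [Hb Hab]]]] Hmin]. split.
  - exists b, a. rewrite (distC Hd). auto.
  - intros a' b' Ha' Hb'. rewrite (distC Hd). auto.
Qed.

Lemma dq_eq0 X Y : dq X Y = 0 -> X = Y.
Proof.
  intros H. destruct (dq_attained X Y) as [a [b [Ha [Hb Hab]]]].
  rewrite H in Hab. apply (dist_eq0 Hd) in Hab; subst b.
  rewrite (class_of_mem X a Ha), (class_of_mem Y a Hb). reflexivity.
Qed.

Lemma dq_gt_m X Y : X <> Y -> m < dq X Y.
Proof.
  intros H. destruct (dq_attained X Y) as [a [b [Ha [Hb <-]]]]. eapply dist_gt_m; eauto.
Qed.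

Lemma near_sym r s : near r s -> near s r.
Proof. unfold near; lra. Qed.

(* A distance [f] with [|r - t| <= f <= 2 m] exists by amalgamation, so [f <= m] by [gap]. *)
Lemma near_trans r s t : D r -> D s -> D t -> m < r -> m < s -> m < t ->
  near r s -> near s t -> near r t.
Proof.
  unfold near; intros Dr Ds Dt Hr Hs Ht Hrs Hst.
  destruct (four_point_amalgam D M d HU HD0 m r m t s) as [f [Df Hf]]; auto; try lra.
  destruct (Rle_dec f m); [lra|]. pose proof (gap f Df ltac:(lra)). lra.
Qed.

Lemma dist_near_dq (X Y : Q) a b : X <> Y -> a \in X -> b \in Y -> near (d a b) (dq X Y).
Proof.
  intros Hne Ha Hb. destruct (dq_attained X Y) as [a' [b' [Ha' [Hb' <-]]]].
  pose proof (class_mem_near X a a' Ha Ha'); pose proof (class_mem_near Y b b' Hb Hb').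
  pose proof (dist_triangle Hd a' a b); pose proof (dist_triangle Hd a a' b).
  pose proof (dist_triangle Hd a' b' b); pose proof (dist_triangle Hd a' b b').
  rewrite (distC Hd a' a), (distC Hd b' b) in *.
  apply (near_trans _ (d a' b)); try apply dD; try (eapply dist_gt_m; eauto);
    unfold near; lra.
Qed.

Lemma one_point_extension_near (l : list (M * R)) z :
  (forall p, In p l -> D (snd p) /\ m < snd p) -> consistent_type d l ->
  (forall p, In p l -> near (d z (fst p)) (snd p)) ->
  exists w, d w z <= m /\ forall p, In p l -> d w (fst p) = snd p.
Proof.
  intros Hpos Hcons Hnear.
  destruct (one_point_extension D M d HU HD0 ((z, m) :: l)) as [w Hw].
  - split.
    + intros p [<-|Hp]; [split; auto|]. destruct (Hpos p Hp); split; [|lra]; assumption.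
    + intros p q [<-|Hp] [<-|Hq]; simpl; auto.
      * rewrite (dist_xx Hd); lra.
      * destruct (Hpos q Hq), (Hnear q Hq). pose proof (dist_ge0 Hd z (fst q)). lra.
      * destruct (Hpos p Hp), (Hnear p Hp). rewrite (distC Hd (fst p)).
        pose proof (dist_ge0 Hd z (fst p)). lra.
  - exists w. split; [apply Req_le, (Hw (z, m)); left; reflexivity|].
    intros p Hp. apply Hw. right; exact Hp.
Qed.

Lemma dq_triangle X Y Z : dq X Z <= dq X Y + dq Y Z.
Proof.
  destruct (classic (X = Y)) as [<-|HXY]; [rewrite dq_xx; pose proof (dq_ge0 X Z); lra|].
  destruct (classic (Y = Z)) as [<-|HYZ]; [rewrite dq_xx; lra|].
  destruct (dq_attained X Y) as [x [y [Hx [Hy Hxy]]]].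
  destruct (class_inhabited Z) as [z Hz].
  destruct (one_point_extension_near ((y, dq Y Z) :: nil) z) as [w [Hwz Hw]].
  - intros p [<-|[]]; split; [apply dq_in_D|apply dq_gt_m, HYZ].
  - intros p q [<-|[]] [<-|[]]; simpl. rewrite (dist_xx Hd). pose proof (dq_ge0 Y Z); lra.
  - intros p [<-|[]]; simpl. rewrite (distC Hd). apply dist_near_dq; auto.
  - specialize (Hw _ (or_introl eq_refl)); simpl in Hw.
    assert (HwZ : w \in Z) by (rewrite (class_of_mem Z z Hz); simpl; unfold sim_class;
                                rewrite (distC Hd); exact Hwz).
    pose proof (dq_le X Z x w Hx HwZ). pose proof (dist_triangle Hd x y w).
    rewrite (distC Hd y w) in *. lra.
Qed.

Lemma dq_metric : is_metric dq.
Proof.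
  repeat split; auto using dq_ge0, dq_eq0, dqC, dq_triangle. intros ->; apply dq_xx.
Qed.

Lemma dq_cls_isometry (h : M -> M) x y : isometric d d h -> (forall z, exists w, h w = z) ->
  dq (cls (h x)) (cls (h y)) = dq (cls x) (cls y).
Proof.
  intros Hh Hs. apply dq_eq.
  destruct (dq_is_min_dist (cls x) (cls y)) as [[a [b [Ha [Hb Hab]]]] Hmin]; simpl in *.
  unfold sim_class in *. split.
  - exists (h a), (h b). simpl; unfold sim_class. rewrite !Hh. auto.
  - intros a' b' Ha' Hb'. destruct (Hs a') as [a0 <-], (Hs b') as [b0 <-].
    simpl in *; unfold sim_class in *. rewrite Hh in *. apply Hmin; assumption.
Qed.

Lemma realize_classes (L : list Q) : exists x : Q -> M,
  (forall X, In X L -> x X \in X) /\ (forall X Y, In X L -> In Y L -> d (x X) (x Y) = dq X Y).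
Proof.
  induction L as [|X0 L [x [Hx Hxd]]].
  - destruct (in_U_inhabited D M d HU HD0) as [p].
    exists (fun _ => p). split; intros; contradiction.
  - destruct (classic (In X0 L)) as [Hin|Hnin].
    { exists x. split; [intros X [<-|HX]|intros X Y [<-|HX] [<-|HY]]; auto. }
    assert (Hne : forall Y, In Y L -> X0 <> Y) by (intros Y HY ->; contradiction).
    destruct (class_inhabited X0) as [z Hz].
    destruct (one_point_extension_near (map (fun Y => (x Y, dq X0 Y)) L) z) as [w [Hwz Hw]].
    + intros p Hp. apply in_map_iff in Hp as [Y [<- HY]].
      split; [apply dq_in_D|apply dq_gt_m; auto].
    + intros p q Hp Hq.
      apply in_map_iff in Hp as [Y [<- HY]]; apply in_map_iff in Hq as [Y' [<- HY']].
      simpl. rewrite Hxd by assumption.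
      pose proof (dq_triangle X0 Y' Y); pose proof (dq_triangle Y X0 Y').
      rewrite (dqC Y' Y), (dqC Y X0) in *. lra.
    + intros p Hp. apply in_map_iff in Hp as [Y [<- HY]]. apply dist_near_dq; auto.
    + assert (HwX : w \in X0) by (rewrite (class_of_mem X0 z Hz); simpl; unfold sim_class;
                                 rewrite (distC Hd); exact Hwz).
      assert (Hw' : forall Y, In Y L -> d w (x Y) = dq X0 Y)
        by (intros Y HY; apply (Hw (x Y, dq X0 Y)), in_map_iff; eauto).
      exists (fun X => if excluded_middle_informative (X = X0) then w else x X). split.
      * intros X HX. destruct excluded_middle_informative as [->|Hn]; auto.
        destruct HX as [->|HX]; [congruence|auto].
      * intros X Y HX HY.
        destruct (excluded_middle_informative (X = X0)) as [->|HnX],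
          (excluded_middle_informative (Y = X0)) as [->|HnY].
        -- rewrite (dist_xx Hd), dq_xx; reflexivity.
        -- destruct HY as [->|HY]; [congruence|auto].
        -- destruct HX as [->|HX]; [congruence|]. rewrite (distC Hd), dqC; auto.
        -- destruct HX as [->|HX]; [congruence|]. destruct HY as [->|HY]; [congruence|auto].
Qed.

Definition rep (X : Q) : M := proj1_sig (constructive_indefinite_description _ (class_inhabited X)).

Lemma rep_mem X : rep X \in X.
Proof. apply (proj2_sig (constructive_indefinite_description _ _)). Qed.

Lemma cls_rep X : cls (rep X) = X.
Proof. symmetry. apply class_of_mem, rep_mem. Qed.

Lemma cls_isometry_mem (h : M -> M) (X : Q) a b : isometric d d h -> a \in X -> b \in X ->
  cls (h a) = cls (h b).
Proof. intros Hh Ha Hb. apply cls_eqP. rewrite Hh. apply (class_mem_near X); assumption. Qed.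

Lemma dq_homogeneous : homogeneous dq.
Proof.
  intros L g Hg.
  destruct (realize_classes L) as [x [Hx Hxd]], (realize_classes (map g L)) as [y [Hy Hyd]].
  destruct (extend_pairs_isometry Hd (proj1 (proj2 (proj2 HU)))
              (map (fun X => (x X, y (g X))) L)) as [h [Hh [Hs HhL]]].
  { intros p q Hp Hq.
    apply in_map_iff in Hp as [X [<- HX]]; apply in_map_iff in Hq as [Y [<- HY]]; simpl.
    rewrite Hyd, Hxd, Hg by (try apply in_map; assumption). reflexivity. }
  exists (fun X => cls (h (rep X))). split; [|split].
  - intros X Y. rewrite dq_cls_isometry, !cls_rep; auto.
  - intros U. destruct (class_inhabited U) as [u Hu]. destruct (Hs u) as [v <-].
    exists (cls v). rewrite (class_of_mem U _ Hu). apply (cls_isometry_mem h (cls v)); auto.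
    + apply rep_mem.
    + apply cls_mem.
  - intros X HX.
    assert (Hhx : h (x X) = y (g X)) by (apply (HhL (x X, y (g X))), in_map_iff; eauto).
    rewrite (cls_isometry_mem h X (rep X) (x X)), Hhx; auto using rep_mem.
    symmetry. apply class_of_mem, Hy, in_map, HX.
Qed.

Lemma classes_countable : countable Q.
Proof.
  destruct (proj1 (proj2 HU)) as [iota Hiota].
  exists (fun X => iota (rep X)). intros X Y H.
  rewrite <- (cls_rep X), <- (cls_rep Y), (Hiota _ _ H). reflexivity.
Qed.

(* Any pair of points at a distance that [dq] takes is moved, by homogeneity of [M], onto a
   pair realizing that value of [dq]. *)
Lemma dq_cls_dist x y : dist_set dq (d x y) -> dq (cls x) (cls y) = d x y.
Proof.
  intros [X [Y HXY]]. destruct (dq_attained X Y) as [u [v [Hu [Hv Huv]]]].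
  destruct (extend_pairs_isometry Hd (proj1 (proj2 (proj2 HU))) ((u, x) :: (v, y) :: nil))
    as [h [Hh [Hs Hhuv]]].
  { intros p q [<-|[<-|[]]] [<-|[<-|[]]]; simpl;
      rewrite ?(dist_xx Hd), ?(distC Hd y x), ?(distC Hd v u); congruence. }
  assert (Hhu : h u = x) by (apply (Hhuv (u, x)); left; reflexivity).
  assert (Hhv : h v = y) by (apply (Hhuv (v, y)); right; left; reflexivity).
  rewrite <- Hhu, <- Hhv, dq_cls_isometry, Hh, Huv by assumption.
  rewrite <- (class_of_mem X u Hu), <- (class_of_mem Y v Hv). reflexivity.
Qed.

Lemma classes_universal (F : Type) (e : F -> F -> R) : finite_type F -> is_metric e ->
  (forall a b, dist_set dq (e a b)) -> exists f : F -> Q, isometric e dq f.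
Proof.
  intros HF He Hv.
  destruct (proj2 (proj2 (proj2 (proj2 HU))) F e HF He) as [f Hf].
  { intros a b. destruct (Hv a b) as [X [Y <-]]. apply dq_in_D. }
  exists (fun a => cls (f a)). intros a b. rewrite dq_cls_dist; rewrite Hf; auto.
Qed.

Lemma quotient_in_U : in_U (dist_set dq) Q dq.
Proof.
  split; [exact dq_metric|split; [exact classes_countable|split; [exact dq_homogeneous|]]].
  split; [tauto|exact classes_universal].
Qed.

Lemma quotient_universal : universal (dist_set dq).
Proof.
  split; [|exists Q, dq; exact quotient_in_U].
  destruct HfinD as [lD HlD]. split; [|split].
  - apply (finite_set_incl lD). intros r [X [Y <-]]. apply HlD, dq_in_D.
  - destruct (in_U_inhabited D M d HU HD0) as [p]. exists (cls p), (cls p). apply dq_xx.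
  - intros r [X [Y <-]]. apply dq_ge0.
Qed.

Section Union.
Variable N : Q -> Prop.

Definition class_union (x : M) : Prop := exists A : Q, N A /\ x \in A.

Lemma class_unionE x : class_union x <-> N (cls x).
Proof.
  split.
  - intros [A [HA Hx]]. rewrite <- (class_of_mem A x Hx). exact HA.
  - intros H. exists (cls x). split; [exact H|apply cls_mem].
Qed.

(* Realize the distances [d y a] inside a class [Y'] of [N] with the same [dq]-distances to the
   classes of [l] as [cls y]: the representative of [Y'] already has them up to [m]. *)
Lemma union_extension_property : extension_property dq N -> extension_property d class_union.
Proof.
  intros HN l y Hl.
  destruct (HN (map cls l) (cls y)) as [Y' [HY' Hdq]].
  { intros A HA. apply in_map_iff in HA as [a [<- Ha]]. apply class_unionE, Hl, Ha. }
  assert (Hdq' : forall a, In a l -> dq Y' (cls a) = dq (cls y) (cls a))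
    by (intros; apply Hdq, in_map; auto).
  destruct (classic (exists a, In a l /\ cls y = cls a)) as [[a [Ha Hya]]|Hno].
  { exists y. split; [apply class_unionE; rewrite Hya; apply class_unionE, Hl, Ha|auto]. }
  assert (Hne : forall a, In a l -> cls y <> cls a) by (intros a Ha E; apply Hno; eauto).
  assert (Hne' : forall a, In a l -> Y' <> cls a).
  { intros a Ha E. apply (Hne a Ha), dq_eq0. rewrite <- (Hdq' a Ha), E. apply dq_xx. }
  destruct (one_point_extension_near (map (fun a => (a, d y a)) l) (rep Y')) as [w [Hwz Hw]].
  - intros p Hp. apply in_map_iff in Hp as [a [<- Ha]]. split; [apply dD|].
    apply (dist_gt_m (cls y) (cls a)); auto using cls_mem.
  - intros p q Hp Hq.
    apply in_map_iff in Hp as [a [<- Ha]]; apply in_map_iff in Hq as [b [<- Hb]]; simpl.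
    pose proof (dist_triangle Hd y b a); pose proof (dist_triangle Hd a y b).
    rewrite (distC Hd b a), (distC Hd a y) in *. lra.
  - intros p Hp. apply in_map_iff in Hp as [a [<- Ha]]; simpl.
    apply (near_trans _ (dq (cls y) (cls a))); try apply dD; try apply dq_in_D;
      try apply dq_gt_m; auto.
    + apply (dist_gt_m Y' (cls a)); auto using rep_mem, cls_mem.
    + apply (dist_gt_m (cls y) (cls a)); auto using cls_mem.
    + rewrite <- (Hdq' a Ha). apply dist_near_dq; auto using rep_mem, cls_mem.
    + apply near_sym, dist_near_dq; auto using cls_mem.
  - exists w. split.
    + exists Y'. split; [exact HY'|]. rewrite <- (cls_rep Y'). simpl; unfold sim_class.
      rewrite (distC Hd). exact Hwz.
    + intros a Ha. apply (Hw (a, d y a)), in_map_iff; eauto.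
Qed.

Lemma union_of_copy : is_copy dq N -> is_copy d class_union.
Proof.
  intros HN. apply (extension_property_copy Hd (proj1 (proj2 (proj2 HU)))).
  - exact (proj1 (proj2 HU)).
  - apply union_extension_property, (copy_extension_property dq_metric dq_homogeneous), HN.
Qed.

End Union.
End Quotient.

Lemma consec_straddle (l : list R) (B : R -> Prop) (t : R) : (forall r, B r -> In r l) ->
  (exists b, B b /\ b < t) -> (exists c, B c /\ t <= c) ->
  exists b c, consec B b c /\ b < t /\ t <= c.
Proof.
  intros Hl Hlo [c [Hc Htc]].
  destruct (ex_max_of_list l (fun x => B x /\ x < t)) as [b [[Hb Hbt] Hbmax]];
    [intros r [Hr _]; auto|exact Hlo|].
  destruct (ex_min_of_list l (fun x => B x /\ b < x)) as [b' [[Hb' Hbb'] Hb'min]];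
    [intros r [Hr _]; auto|exists c; split; [exact Hc|lra]|].
  exists b, b'. repeat split; auto.
  - intros e He [H1 H2]. pose proof (Hb'min e (conj He H1)). lra.
  - apply Rnot_lt_le. intros H. pose proof (Hbmax b' (conj Hb' H)). lra.
Qed.

Section Blocks.
Variable D : R -> Prop.
Hypothesis D_ge0 : forall r, D r -> 0 <= r.

Lemma consec_add_above (B : R -> Prop) m c b b' : B m -> (forall b, B b -> b <= m) -> m < c ->
  consec (fun r => B r \/ r = c) b b' -> consec B b b' \/ (b = m /\ b' = c).
Proof.
  intros HBm Hmax Hmc [[Hb| ->] [[Hb'| ->] [Hlt Hn]]].
  - left. split; [exact Hb|split; [exact Hb'|split; [exact Hlt|]]].
    intros e He. apply Hn. left; exact He.
  - right. split; [|reflexivity]. pose proof (Hmax b Hb).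
    destruct (Rle_or_lt m b); [lra|]. exfalso. apply (Hn m); [left|split]; auto.
  - pose proof (Hmax b' Hb'). lra.
  - lra.
Qed.

(* Otherwise adjoining the successor [c] of [m] to [B] preserves the block conditions,
   against the maximality of [B]. *)
Lemma block_max_succ_far (B : R -> Prop) m c : is_block D B -> B m ->
  (forall b, B b -> b <= m) -> is_succ D m c ->
  forall b0, B b0 -> (forall b, B b -> b0 <= b) -> m + b0 < c.
Proof.
  intros [[HBD [b1 [Hb1 [Hb1min [Hpred [Hsucc Hadd]]]]]] Hmaxl] HBm Hmax Hc b0 Hb0 Hb0min.
  assert (b1 = b0) as <- by (pose proof (Hb1min b0 Hb0); pose proof (Hb0min b1 Hb1); lra).
  destruct Hc as [Dc [Hmc Hcmin]].
  apply Rnot_le_lt. intros Hle.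
  assert (Hm0 : 0 < m) by (destruct (HBD m HBm); pose proof (D_ge0 m H); lra).
  enough (HB' : block_cond D (fun r => B r \/ r = c)).
  { pose proof (Hmax c (Hmaxl _ HB' (fun r Hr => or_introl Hr) c (or_intror eq_refl))). lra. }
  split; [intros b [Hb| ->]; auto; split; [exact Dc|lra]|].
  exists b1. split; [left; exact Hb1|].
  split; [intros b [Hb| ->]; auto; pose proof (Hb1min m HBm); lra|].
  split; [exact Hpred|].
  split; intros b b' Hbb'; destruct (consec_add_above B m c b b' HBm Hmax Hmc Hbb') as [H|[-> ->]];
    auto; [split; auto|lra].
Qed.

(* If [D] had a distance [c0] in (m, 2 m], the least one would be the successor of [m]; a
   consecutive pair [b < b'] of [B] with [b + m < c0 <= b' + m] then amalgamates to a distance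
   strictly between [m] and [c0]. *)
Lemma block_max_gap (M : Type) (d : M -> M -> R) (B : R -> Prop) m :
  in_U D M d -> D 0 -> finite_set D -> is_block D B -> B m -> (forall b, B b -> b <= m) ->
  forall r, D r -> m < r -> 2 * m < r.
Proof.
  intros HU HD0 [lD HlD] HB HBm Hmax.
  pose proof HB as [[HBD [b0 [Hb0 [Hb0min [_ [_ Hadd]]]]]] _].
  apply NNPP. intros Hno.
  destruct (ex_min_of_list lD (fun r => D r /\ m < r /\ r <= 2 * m))
    as [c0 [[Dc0 [Hmc0 Hc0m]] Hc0min]]; [intros r [Hr _]; apply HlD, Hr|..].
  { apply NNPP. intros H. apply Hno. intros r Dr Hr. apply Rnot_le_lt. intros Hr2. eauto. }
  assert (Hsucc : is_succ D m c0).
  { repeat split; auto. intros q Dq Hq.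
    destruct (Rle_or_lt q (2 * m)); [apply Hc0min; auto|lra]. }
  pose proof (block_max_succ_far B m c0 HB HBm Hmax Hsucc b0 Hb0 Hb0min) as Hfar.
  assert (Hb00 : 0 < b0) by (destruct (HBD b0 Hb0); pose proof (D_ge0 b0 H); lra).
  destruct (consec_straddle lD B (c0 - m)) as [b [b' [Hbb' [Hb Hb']]]].
  - intros r Hr. apply HlD, HBD, Hr.
  - exists b0. split; [exact Hb0|lra].
  - exists m. split; [exact HBm|lra].
  - pose proof (Hadd b b' Hbb') as Hb'b. destruct Hbb' as [HBb [HBb' [Hlt _]]].
    pose proof (Hmax b' HBb'). pose proof (Hmax b0 Hb0). pose proof (Hb0min b HBb).
    assert (Dm : D m) by apply HBD, HBm.
    assert (Db0 : D b0) by apply HBD, Hb0.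
    assert (Db : D b) by apply HBD, HBb.
    assert (Db' : D b') by apply HBD, HBb'.
    destruct (four_point_amalgam D M d HU HD0 b0 b c0 m b') as [f [Df Hf]]; auto; try lra.
    assert (c0 <= f) by (apply (proj2 (proj2 Hsucc)); auto; lra). lra.
Qed.

End Blocks.

Theorem lemma9p3 (D : R -> Prop) (B : R -> Prop) (mm : R)
  (M : Type) (d : M -> M -> R) :
  universal D ->
  (exists B1 B2, is_block D B1 /\ is_block D B2 /\ ~ (forall r, B1 r <-> B2 r)) ->
  is_block D B ->
  (forall b, D b -> b <> 0 -> (forall c, D c -> c <> 0 -> b <= c) -> B b) ->
  B mm -> (forall b, B b -> b <= mm) ->
  in_U D M d ->
  universal (dist_set (dquot d mm)) /\
  in_U (dist_set (dquot d mm)) (classes d mm) (dquot d mm) /\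
  (forall N : classes d mm -> Prop, is_copy (dquot d mm) N ->
     is_copy d (fun x => exists A : classes d mm, N A /\ proj1_sig A x)).
Proof.
  intros [[HfinD [HD0 D_ge0]] _] _ HB _ HBm Hmax HU.
  destruct (proj1 (proj1 HB) mm HBm) as [Dm Hm0].
  assert (m_pos : 0 < mm) by (pose proof (D_ge0 mm Dm); lra).
  pose proof (block_max_gap D D_ge0 M d B mm HU HD0 HfinD HB HBm Hmax) as gap.
  split; [|split].
  - eapply quotient_universal; eauto.
  - eapply quotient_in_U; eauto.
  - intros N HN. eapply union_of_copy; eauto.
Qed.
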